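(* Let $m$ be odd, let $f:\mathbb{Z}_m\to\{\pm1,\pm\mathrm{i}\}$ be a quaternary sequence, and let $\phi(0,k)=\mathrm{Re}f(k)-\mathrm{Im}f(k)$, $\phi(1,k)=\mathrm{Re}f(k)+\mathrm{Im}f(k)$ for $k\in\mathbb{Z}_m$. Put \[ B=\{j\in\mathbb{Z}_m:\phi(0,j)=-1\},\qquad D=\{j\in\mathbb{Z}_m:\phi(1,j)=-1\}. \] Then $f$ is an OQS if and only if $B$ and $D$ are $2$-$\{m;|B|,|D|;|B|+|D|-\frac{m+1}{2}\}$ ASDS and the multiset $B-D$ is symmetric.
   Context: $\mathrm{i}=\sqrt{-1}$. A quaternary sequence $f:\mathbb{Z}_m\to\{\pm1,\pm\mathrm{i}\}$ of odd length $m$ is an OQS if $|R_f(w)|=1$ for all $1\le w\le m-1$, where $R_f(w)=\sum_{k\in\mathbb{Z}_m}f(k)\overline{f(k+w)}$. For $B,D\subseteq\mathbb{Z}_m$ and $a\in\mathbb{Z}_m\setminus\{0\}$, let $N_{B,D}(a)=|\{(x,x')\in B\times B: x-x'\equiv a\}|+|\{(y,y')\in D\times D: y-y'\equiv a\}|$. For an integer $\mu$, $B$ and $D$ are $2$-$\{m;k,r;\mu\}$ ASDS if $|B|=k$, $|D|=r$ and $N_{B,D}(a)\in\{\mu,\mu+1\}$ for every $a\in\mathbb{Z}_m\setminus\{0\}$. The multiset $B-D$ of differences $x-y \bmod m$, $(x,y)\in B\times D$, is symmetric (closed under negation) if for every $w\in\mathbb{Z}_m$, $|\{(x,y)\in B\times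 D: x-y\equiv w\}|=|\{(x,y)\in B\times D: x-y\equiv -w\}|$. *)

(* Z_m is modelled by 'I_m with arithmetic mod m on nat
   (this works uniformly for all odd m, including m = 1). *)
From HB Require Import structures.
From mathcomp Require Import all_boot all_order all_algebra all_field.
Set Implicit Arguments. Unset Strict Implicit. Unset Printing Implicit Defensive.
Import Order.TTheory GRing.Theory Num.Theory.
Local Open Scope ring_scope.

Definition addm (m : nat) (k : 'I_m) (w : nat) : nat := ((k + w) %% m)%N.

Lemma addm_lt (m : nat) (k : 'I_m) (w : nat) : (addm k w < m)%N.
Proof. rewrite /addm ltn_pmod //; exact: leq_ltn_trans (leq0n k) (ltn_ord k). Qed.

Definition shiftm (m : nat) (k : 'I_m) (w : nat) : 'I_m := Ordinal (addm_lt k w).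

Definition quaternary (m : nat) (f : 'I_m -> algC) : Prop :=
  forall k, f k \in [:: 1; -1; 'i; - 'i].

Definition autocorr (m : nat) (f : 'I_m -> algC) (w : nat) : algC :=
  \sum_(k : 'I_m) f k * (f (shiftm k w))^*.

Definition OQS (m : nat) (f : 'I_m -> algC) : Prop :=
  quaternary f /\ forall w : nat, (1 <= w <= m.-1)%N -> `|autocorr f w| = 1.

Definition ndiff (m : nat) (B D : {set 'I_m}) (a : nat) : nat :=
  #|[set p : 'I_m * 'I_m | (p.1 \in B) && (p.2 \in D) && (val p.1 == addm p.2 a)]|.

Definition N_BD (m : nat) (B D : {set 'I_m}) (a : nat) : nat :=
  (ndiff B B a + ndiff D D a)%N.

Definition ASDS2 (m : nat) (B D : {set 'I_m}) (k r : nat) (mu : int) : Prop :=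
  #|B| = k /\ #|D| = r /\
  forall a : nat, (1 <= a <= m.-1)%N ->
    ((N_BD B D a)%:Z == mu) || ((N_BD B D a)%:Z == mu + 1).

(* the multiset B - D is closed under negation:
   #{(x,y) : x - y = w} = #{(x,y) : x - y = -w}, i.e. y - x = w *)
Definition symmetric_diff (m : nat) (B D : {set 'I_m}) : Prop :=
  forall w : 'I_m,
    #|[set p : 'I_m * 'I_m | (p.1 \in B) && (p.2 \in D) && (val p.1 == addm p.2 w)]|
  = #|[set p : 'I_m * 'I_m | (p.1 \in B) && (p.2 \in D) && (val p.2 == addm p.1 w)]|.

Definition phi0 (z : algC) : algC := 'Re z - 'Im z.
Definition phi1 (z : algC) : algC := 'Re z + 'Im z.

From HB Require Import structures.
From mathcomp Require Import all_boot all_order all_algebra all_field.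
From mathcomp Require Import ring zify.
Import Order.TTheory GRing.Theory Num.Theory.
Local Open Scope ring_scope.
Set Implicit Arguments. Unset Strict Implicit. Unset Printing Implicit Defensive.

(* Let b, d be the indicators of B and D.  Every quaternary value is
   f(k) = (1 - b_k - d_k) + i (b_k - d_k), so expanding f(k) conj f(k+w) and
   summing over k gives R_f(w) = X + 2iY with integers
   X = m - 2|B| - 2|D| + 2 N_{B,D}(w) and Y the multiplicity of w in B - D
   minus that of -w.  Now |X + 2iY| = 1 forces Y = 0 and X = -1 or 1, and for
   m = 2r + 1 these are exactly N_{B,D}(w) = mu and N_{B,D}(w) = mu + 1. *)

Definition indicator (T : finType) (A : {set T}) (x : T) : int := (x \in A : nat)%:Z.

Lemma mul_conj_rect (a b c d : int) :
  (a%:~R + 'i * b%:~R) * (c%:~R + 'i * d%:~R)^*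
  = (a * c + b * d)%:~R + 'i * (b * c - a * d)%:~R :> algC.
Proof.
rewrite conjC_rect ?realz //.
have -> : (a%:~R + 'i * b%:~R) * (c%:~R - 'i * d%:~R)
  = (a * c + b * d)%:~R + 'i * (b * c - a * d)%:~R - (b * d)%:~R * ('i * 'i + 1) :> algC.
  by ring.
by rewrite -expr2 sqrCi addNr mulr0 subr0.
Qed.

Lemma quaternary_rect (z : algC) : z \in [:: 1; -1; 'i; - 'i] ->
  let b := (phi0 z == -1 : nat)%:Z in let d := (phi1 z == -1 : nat)%:Z in
  z = (1 - b - d)%:~R + 'i * (b - d)%:~R.
Proof.
have Re1 : 'Re (1 : algC) = 1 by apply/Creal_ReP; rewrite real1.
have Im1 : 'Im (1 : algC) = 0 by apply/Creal_ImP; rewrite real1.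
have m1_neq1 : (-1 : algC) != 1 by rewrite -subr_eq0 -opprD oppr_eq0 (pnatr_eq0 _ 2).
rewrite !inE /phi0 /phi1 => /or4P[] /eqP ->; rewrite ?raddfN /= ?Re_i ?Im_i ?Re1 ?Im1;
  rewrite ?oppr0 ?subr0 ?addr0 ?sub0r ?add0r ?opprK ?eqxx ?(negbTE m1_neq1);
  rewrite ?(eq_sym 1 (-1)) ?(negbTE m1_neq1) /=; ring.
Qed.

Definition quaternary_seq (m : nat) (B D : {set 'I_m}) (k : 'I_m) : algC :=
  (1 - indicator B k - indicator D k)%:~R + 'i * (indicator B k - indicator D k)%:~R.

Lemma sum_indicator (T : finType) (A : {set T}) : \sum_x indicator A x = #|A|%:Z.
Proof.
rewrite -sum1_card -natz natr_sum [RHS]big_mkcond; apply: eq_bigr => x _.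
by rewrite /indicator; case: (x \in A).
Qed.

Section Shifts.
Variable m : nat.
Implicit Types (U V : {set 'I_m}) (w : nat).

Lemma shiftm_inj w : injective (fun k : 'I_m => shiftm k w).
Proof.
move=> x y /(congr1 val) /= /eqP; rewrite /addm eqn_modDr !modn_small // => /eqP.
exact: val_inj.
Qed.

Lemma sum_shiftm (R : zmodType) (F : 'I_m -> R) w : \sum_k F (shiftm k w) = \sum_k F k.
Proof. by symmetry; apply: (reindex_inj (@shiftm_inj w)). Qed.

Lemma ndiffE U V w :
  ndiff U V w = #|[set k | (k \in V) && (shiftm k w \in U)]|.
Proof.
rewrite -(card_imset _ (f := fun k => (shiftm k w, k))); last by move=> x y [].
apply: eq_card => -[x y]; rewrite [in LHS]inE /=; apply/idP/imsetP.
  move=> /andP[/andP[xU yV] /eqP e]; have shift_y : shiftm y w = x by apply: val_inj.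
  by exists y; rewrite ?inE ?yV ?shift_y.
by case=> k; rewrite inE => /andP[kV sU] [-> ->]; rewrite /= sU kV eqxx.
Qed.

Lemma ndiff_sum U V w :
  (ndiff U V w)%:Z = \sum_k indicator V k * indicator U (shiftm k w).
Proof.
rewrite ndiffE -sum_indicator; apply: eq_bigr => k _.
by rewrite /indicator inE; case: (k \in V); case: (_ \in U).
Qed.

Lemma card_swapped_diff U V w :
  #|[set p : 'I_m * 'I_m | (p.1 \in U) && (p.2 \in V) && (val p.2 == addm p.1 w)]|
  = ndiff V U w.
Proof.
rewrite /ndiff -(card_imset _ (can_inj swap_pairK)); apply: eq_card => -[x y].
rewrite -[(x, y)]swap_pairK mem_imset; last exact: can_inj swap_pairK.
by rewrite !inE /= [(y \in U) && _]andbC.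
Qed.

Lemma ndiff0C U V : ndiff U V 0 = ndiff V U 0.
Proof.
have shiftm0 (k : 'I_m) : shiftm k 0 = k by apply: val_inj; rewrite /= /addm addn0 modn_small.
by rewrite !ndiffE; apply: eq_card => k; rewrite !inE !shiftm0 andbC.
Qed.

Lemma symmetric_diffE U V : symmetric_diff U V <-> forall w : 'I_m, ndiff U V w = ndiff V U w.
Proof. by split=> H w; have := H w; rewrite card_swapped_diff. Qed.

End Shifts.

Section Autocorrelation.
Variables (m : nat) (B D : {set 'I_m}).
Local Notation b := (indicator B).
Local Notation d := (indicator D).

Lemma sum_re_rect w :
  \sum_k ((1 - b k - d k) * (1 - b (shiftm k w) - d (shiftm k w))
          + (b k - d k) * (b (shiftm k w) - d (shiftm k w)))
  = m%:Z - 2 * #|B|%:Z - 2 * #|D|%:Z + 2 * (ndiff B B w)%:Z + 2 * (ndiff D D w)%:Z.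
Proof.
rewrite (eq_bigr (fun k => 1 - b k - d k - b (shiftm k w) - d (shiftm k w)
  + 2 * (b k * b (shiftm k w)) + 2 * (d k * d (shiftm k w)))); last by move=> k _; ring.
rewrite !big_split /= !sumrN -!mulr_sumr !sum_shiftm !sum_indicator !ndiff_sum.
by rewrite sumr_const card_ord; ring.
Qed.

Lemma sum_im_rect w :
  \sum_k ((b k - d k) * (1 - b (shiftm k w) - d (shiftm k w))
          - (1 - b k - d k) * (b (shiftm k w) - d (shiftm k w)))
  = 2 * ((ndiff B D w)%:Z - (ndiff D B w)%:Z).
Proof.
rewrite (eq_bigr (fun k => b k - d k - b (shiftm k w) + d (shiftm k w)
  + 2 * (d k * b (shiftm k w)) - 2 * (b k * d (shiftm k w)))); last by move=> k _; ring.
rewrite !big_split /= !sumrN -!mulr_sumr !sum_shiftm !ndiff_sum.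
by ring.
Qed.

Lemma autocorr_rect (f : 'I_m -> algC) w :
  f =1 quaternary_seq B D ->
  autocorr f w =
    (m%:Z - 2 * #|B|%:Z - 2 * #|D|%:Z + 2 * (ndiff B B w)%:Z + 2 * (ndiff D D w)%:Z)%:~R
    + 'i * (2 * ((ndiff B D w)%:Z - (ndiff D B w)%:Z))%:~R.
Proof.
move=> f_rect; rewrite -sum_re_rect -sum_im_rect /autocorr.
under eq_bigr do rewrite !f_rect /quaternary_seq mul_conj_rect.
by rewrite big_split /= -mulr_sumr !rmorph_sum.
Qed.

End Autocorrelation.

Lemma normC_rect_int_eq1 (X Y : int) :
  (`|X%:~R + 'i * Y%:~R| == 1 :> algC) = (X ^+ 2 + Y ^+ 2 == 1).
Proof.
rewrite -(sqrp_eq1 (normr_ge0 _)) normC2_Re_Im Re_rect ?realz // Im_rect ?realz //.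
by rewrite -!rmorphXn -rmorphD /= -[1 : algC]/((1 : int)%:~R) eqr_int.
Qed.

Lemma sqr_add_even_sqr_eq1 (X Y : int) :
  (X ^+ 2 + (2 * Y) ^+ 2 == 1) = ((X == -1) || (X == 1)) && (Y == 0).
Proof.
apply/eqP/idP => [sum_sqr_eq1 | /andP[/orP[] /eqP -> /eqP ->] //].
have Y0 : Y = 0 by nia.
have : (X + 1) * (X - 1) = 0 by rewrite Y0 in sum_sqr_eq1; nia.
by move/eqP; rewrite mulf_eq0 addr_eq0 subr_eq0 Y0 eqxx andbT.
Qed.

Lemma norm_autocorr_eq1 (m : nat) (B D : {set 'I_m}) (f : 'I_m -> algC) w :
  odd m ->
  f =1 quaternary_seq B D ->
  let mu := (#|B| + #|D|)%:Z - ((m.+1) %/ 2)%:Z in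
  (`|autocorr f w| == 1) =
    (((N_BD B D w)%:Z == mu) || ((N_BD B D w)%:Z == mu + 1))
    && (ndiff B D w == ndiff D B w).
Proof.
move=> m_odd f_rect mu.
have m_half : m = (2 * m./2 + 1)%N by rewrite -{1}(odd_double_half m) m_odd -mul2n addnC.
rewrite (autocorr_rect _ f_rect) normC_rect_int_eq1 sqr_add_even_sqr_eq1 /mu /N_BD.
by congr (_ && _); [congr (_ || _)|]; apply/eqP/eqP; lia.
Qed.

Theorem theorem3 (m : nat) (f : 'I_m -> algC) :
  odd m -> quaternary f ->
  let B := [set j : 'I_m | phi0 (f j) == -1] in
  let D := [set j : 'I_m | phi1 (f j) == -1] in
  OQS f <->
  (ASDS2 B D #|B| #|D| ((#|B| + #|D|)%:Z - ((m.+1) %/ 2)%:Z) /\ symmetric_diff B D).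
Proof.
move=> m_odd f_quaternary B D.
have f_rect : f =1 quaternary_seq B D.
  by move=> k; rewrite /quaternary_seq /indicator !inE; exact: quaternary_rect.
have norm_eq1 w := norm_autocorr_eq1 w m_odd f_rect.
rewrite /OQS /ASDS2 symmetric_diffE; split.
- case=> _ R_eq1; split; first (do 2 split=> //).
    by move=> a a_range; have /eqP := R_eq1 a a_range; rewrite norm_eq1 => /andP[].
  move=> w; have [w0 | w_neq0] := eqVneq (val w) 0%N; first by rewrite w0 ndiff0C.
  have w_range : (1 <= w <= m.-1)%N.
    by rewrite lt0n w_neq0 /=; have := ltn_ord w; lia.
  by have /eqP := R_eq1 w w_range; rewrite norm_eq1 => /andP[_ /eqP].
- case=> -[_ [_ N_range]] B_D_sym; split=> // w w_range; apply/eqP.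
  have w_lt_m : (w < m)%N by lia.
  by rewrite norm_eq1 N_range //= (B_D_sym (Ordinal w_lt_m)).
Qed.
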